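(* At any point during the execution of the Part I procedure, let $uv\in E$ be an edge such that $u$ is even and $v$ is odd. Then $\mathrm{lcp}_{\mathrm{odd}}(v)\le \mathrm{lcp}(u)+1$.
   Context: Let $G=(V,E)$ be a finite undirected graph and $M$ a matching in $G$; free vertices and $\mathit{mate}(v)$ are as usual. The Part I procedure maintains a search structure $S$: a forest whose nodes are either single (odd) vertices or blossoms (disjoint vertex sets with a distinguished base vertex), each tree rooted at a blossom containing a free vertex. Vertices in $S$ are labelled even (those in blossoms) or odd; vertices not in $S$ are unlabelled. A vertex is born even/odd according to the label it receives when inserted. The procedure maintains $\mathrm{lcp}(v)$ for even vertices and $\mathrm{lcp}_{\mathrm{odd}}(v)$ for vertices born odd. The blossom nodes currently in $S$ are the maximal blossoms. Phase $0$: every free vertex $v$ becomes the root of its own tree as a trivial blossom $\{v\}$ with base $v$, even, $\mathrm{lcp}(v)=0$. For $\Delta=1,2,\dots$, phase $\Delta$ does: (i) if $\Delta$ is even, growth steps: while some even vertex $v$ with $\mathrm{lcp}(v)=\Delta-2$ has a neighbour $x$ not in $S$, add $x$ as an odd child of the blossom containing $v$ with $\mathrm{lcp}_{\mathrm{odd}}(x)=\Delta-1$, and $\mathit{mate}(x)$ as a child of $x$, as a trivial even blossom with $\mathrm{lcp}(\mathit{mate}(x))=\Delta$; (ii) bridge steps: while there is a non-matching edge $xy$ with $x,y$ even, in different maximal blossoms $B_x,B_y$, and $\mathrm{lcp}(x)+\mathrm{lcp}(y)=2\Delta-2$: if $B_x,B_y$ lie in different trees the procedure stops; otherwise let $B$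 be the lowest common ancestor of $B_x,B_y$; every odd vertex $z$ on the tree paths from $B_x$ and $B_y$ to $B$ becomes even with $\mathrm{lcp}(z)=\mathrm{lcp}(x)+1+\mathrm{lcp}(y)-\mathrm{lcp}_{\mathrm{odd}}(z)$, and $B$ together with all blossoms and odd vertices on both paths is merged into one new blossom with base equal to the base of $B$, replacing $B$ in the tree. *)

From mathcomp Require Import all_boot.
From mathcomp Require Import boolp.
Set Implicit Arguments. Unset Strict Implicit. Unset Printing Implicit Defensive.

Section PartI.
Variables (V : finType) (e : rel V) (mate : V -> option V).

(* mate encodes the matching M: mate x = Some y iff xy in M. *)
Definition is_matching := forall x y, mate x = Some y -> mate y = Some x /\ e x y.

(* State of the procedure.
   - delta   : current phase number Delta
   - growing : true while in the growth sub-phase (i), false in bridge sub-phase (ii)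
   - inS     : vertices in S;   odd_set : vertices currently labelled odd (subset of inS);
               even vertices are inS :\: odd_set
   - rep w   : the node of S containing w: the base of its maximal blossom if w is
               even, w itself if w is odd
   - par n   : parent node of node n (None for roots)
   - lcp, lcpo : lcp(v) and lcp_odd(v) *)
Record state := St {
  delta : nat; growing : bool; inS : {set V}; odd_set : {set V};
  rep : V -> V; par : V -> option V; lcp : V -> nat; lcpo : V -> nat }.

Definition even_set (s : state) : {set V} := inS s :\: odd_set s.

Definition up (s : state) (k : nat) (n : V) : option V :=
  iter k (fun o => obind (par s) o) (Some n).
Definition ancs (s : state) (a n : V) : Prop := exists k, up s k n = Some a.
Definition is_lca (s : state) (b n1 n2 : V) : Prop :=
  ancs s b n1 /\ ancs s b n2 /\
  (forall c, ancs s c n1 -> ancs s c n2 -> ancs s c b).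

Definition upd {T : Type} (f : V -> T) (a : V) (t : T) : V -> T :=
  fun w => if w == a then t else f w.

Definition init : state :=
  St 1 true [set v | mate v == None] set0 id (fun _ => None) (fun _ => 0) (fun _ => 0).

Definition grow_avail (s : state) : Prop :=
  ~~ odd (delta s) /\
  exists v x, [/\ v \in even_set s, lcp s v + 2 = delta s, e v x & x \notin inS s].

(* growth step: x odd child of the blossom of v, y = mate x even child of x *)
Definition grow_state (s : state) (v x y : V) : state :=
  St (delta s) true (x |: (y |: inS s)) (x |: odd_set s)
     (upd (upd (rep s) x x) y y)
     (upd (upd (par s) x (Some (rep s v))) y (Some x))
     (upd (lcp s) y (delta s))
     (upd (lcpo s) x (delta s).-1).

Definition bridge_edge (s : state) (x y : V) : Prop :=
  [/\ x \in even_set s, y \in even_set s, e x y & mate x != Some y] /\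
  rep s x != rep s y /\ lcp s x + lcp s y + 2 = 2 * delta s.

Definition on_paths (s : state) (x y b n : V) : Prop :=
  ancs s b n /\ (ancs s n (rep s x) \/ ancs s n (rep s y)).

Definition merge_state (s : state) (x y b : V) : state :=
  let P n := `[< on_paths s x y b n >] in
  St (delta s) false (inS s) [set z in odd_set s | ~~ P z]
     (fun w => if (w \in inS s) && P (rep s w) then b else rep s w)
     (fun n => if par s n is Some p then (if P p then Some b else Some p) else None)
     (fun z => if (z \in odd_set s) && P z
               then lcp s x + 1 + lcp s y - lcpo s z else lcp s z)
     (lcpo s).

Definition end_growth (s : state) : state :=
  St (delta s) false (inS s) (odd_set s) (rep s) (par s) (lcp s) (lcpo s).
Definition next_phase (s : state) : state :=
  St (delta s).+1 true (inS s) (odd_set s) (rep s) (par s) (lcp s) (lcpo s).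

Inductive step (s : state) : state -> Prop :=
| StGrow v x y : growing s -> ~~ odd (delta s) -> v \in even_set s ->
    lcp s v + 2 = delta s -> e v x -> x \notin inS s -> mate x = Some y ->
    step s (grow_state s v x y)
| StEndGrow : growing s -> ~ grow_avail s -> step s (end_growth s)
| StBridge x y b : ~~ growing s -> bridge_edge s x y ->
    is_lca s b (rep s x) (rep s y) -> step s (merge_state s x y b)
    (* if B_x, B_y lie in different trees (no common ancestor) the procedure
       stops: no successor state *)
| StNext : ~~ growing s -> ~ (exists x y, bridge_edge s x y) ->
    step s (next_phase s).

Inductive reachable : state -> Prop :=
| ReachInit : reachable init
| ReachStep s s' : reachable s -> step s s' -> reachable s'.

End PartI.

From mathcomp Require Import all_boot.
From mathcomp Require Import zify.

Set Implicit Arguments.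
Unset Strict Implicit.
Unset Printing Implicit Defensive.

(* The bound is one clause of an invariant of the procedure.  Besides it, the
   invariant says that every odd vertex has lcp_odd(v) <= Delta - 1, that lcp is
   even on even vertices and lcp_odd odd on odd ones, and that an even vertex u
   whose neighbourhood has already been scanned by the growth steps (lcp(u) + 2
   < Delta, or = Delta once growth has ended) has all its neighbours in S.
   A vertex x becoming odd at phase Delta gets lcp_odd(x) = Delta - 1, and its
   even neighbours u are not scanned, hence lcp(u) >= Delta - 2; vertices made
   even by a bridge step get lcp >= Delta.  Growth ends in an even phase only
   when no scanned vertex has an outside neighbour, and in an odd phase no even
   vertex has lcp(u) + 2 = Delta by parity. *)

Section PartIInvariant.
Variables (V : finType) (e : rel V) (mate : V -> option V).
Implicit Types (s : state V) (u v w : V).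

Definition scanned s u :=
  lcp s u + 2 < delta s \/ (lcp s u + 2 = delta s /\ ~~ growing s).

Record invariant s : Prop := Invariant {
  lcpo_edge_bound : forall u v, e u v -> u \in even_set s -> v \in odd_set s ->
    lcpo s v <= lcp s u + 1;
  scanned_closed : forall u w, u \in even_set s -> e u w -> scanned s u ->
    w \in inS s;
  lcpo_lt_delta : forall v, v \in odd_set s -> lcpo s v < delta s;
  lcp_even : forall u, u \in even_set s -> ~~ odd (lcp s u);
  lcpo_odd : forall v, v \in odd_set s -> odd (lcpo s v) }.

Lemma invariant_init : invariant (init mate).
Proof. by split=> //= [u w _ _ [|[]] | v]; rewrite ?inE. Qed.

Section Grow.
Variables (s : state V) (v x y : V).
Hypotheses (Is : invariant s) (even_delta : ~~ odd (delta s))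
  (lcp_v : lcp s v + 2 = delta s) (x_out : x \notin inS s).
Let s' := grow_state s v x y.

Lemma grow_even_set u : u \in even_set s' -> u = y \/ u != x /\ u \in even_set s.
Proof.
rewrite /even_set /= !inE; case: (eqVneq u y) => [|uy]; first by left.
by case: (eqVneq u x) => //= ux /andP[-> ->]; right.
Qed.

Lemma grow_odd_set w : w \in odd_set s' -> w != x -> w \in odd_set s.
Proof. by rewrite /= !inE => /orP[/eqP->|//]; rewrite eqxx. Qed.

Lemma even_neighbour_unscanned u : u \in even_set s -> e u x -> ~ scanned s u.
Proof. by move=> Hu eux /(scanned_closed Is Hu eux); apply/negP. Qed.

Lemma invariant_grow : invariant s'.
Proof.
have lcpE u : lcp s' u = if u == y then delta s else lcp s u by [].
have lcpoE w : lcpo s' w = if w == x then (delta s).-1 else lcpo s w by [].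
split.
- move=> u w euw /grow_even_set Hu Hw'; rewrite lcpE lcpoE.
  case: (eqVneq w x) => [wx | /(grow_odd_set Hw') Hw].
    case: Hu => [->|[ux Hu]]; rewrite ?eqxx; first lia.
    case: eqVneq => _; first lia.
    by move: (even_neighbour_unscanned Hu); rewrite -wx /scanned => /(_ euw); lia.
  have := lcpo_lt_delta Is Hw.
  case: Hu => [->|[_ Hu]]; rewrite ?eqxx; first lia.
  by case: eqVneq => _; [lia | move=> _; exact: lcpo_edge_bound].
- move=> u w /grow_even_set [->|[_ Hu]] euw; rewrite /scanned lcpE ?eqxx /=; first lia.
  case: eqVneq => _; first lia.
  by case=> [lt | [_ //]]; rewrite !inE (scanned_closed Is Hu euw) ?orbT //; left.
- move=> w Hw'; rewrite lcpoE /=.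
  case: (eqVneq w x) => [_ | /(grow_odd_set Hw') /(lcpo_lt_delta Is)]; lia.
- move=> u /grow_even_set [->|[_ Hu]]; rewrite lcpE ?eqxx //.
  by case: eqVneq => _ //; exact: lcp_even.
- move=> w Hw'; rewrite lcpoE.
  case: (eqVneq w x) => [_ | /(grow_odd_set Hw')]; last exact: lcpo_odd.
  by move: even_delta; case: (delta s) lcp_v => [|d] /=; [lia | rewrite negbK].
Qed.

End Grow.

Section Merge.
Variables (s : state V) (x y b : V).
Hypotheses (Is : invariant s) (not_growing : ~~ growing s) (x_even : x \in even_set s)
  (y_even : y \in even_set s) (lcp_xy : lcp s x + lcp s y + 2 = 2 * delta s).
Let s' := merge_state s x y b.

Lemma merge_odd_set w : w \in odd_set s' -> w \in odd_set s.
Proof. by rewrite inE => /andP[]. Qed.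

(* A vertex z turned even gets lcp(z) = 2 Delta - 1 - lcp_odd(z) >= Delta. *)
Lemma merge_even_set u : u \in even_set s' ->
  u \in odd_set s /\ delta s <= lcp s' u /\ ~~ odd (lcp s' u) \/
  u \in even_set s /\ lcp s' u = lcp s u.
Proof.
rewrite /even_set /s' /= !inE; case: (boolP (u \in odd_set s)) => /= uo; last first.
  by move=> uS; right.
rewrite negbK => /andP[-> _]; left; split=> //.
have := lcpo_lt_delta Is uo; split; first lia.
rewrite oddB; last lia.
by rewrite lcpo_odd // !oddD (negbTE (lcp_even Is x_even)) (negbTE (lcp_even Is y_even)).
Qed.

Lemma invariant_merge : invariant s'.
Proof.
have deltaE : delta s' = delta s by [].
have lcpoE : lcpo s' = lcpo s by [].
split; rewrite ?lcpoE.
- move=> u w euw /merge_even_set [[_ [lt _]] | [Hu ->]] /merge_odd_set Hw.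
    by have := lcpo_lt_delta Is Hw; lia.
  exact: lcpo_edge_bound.
- move=> u w /merge_even_set [[_ [lt _]] | [Hu lcpE]] euw; rewrite /scanned deltaE.
    lia.
  by rewrite lcpE => -[lt | [eq _]]; apply: (scanned_closed Is Hu euw); [left | right].
- by move=> w /merge_odd_set /(lcpo_lt_delta Is).
- by move=> u /merge_even_set [[_ []] | [Hu ->]] //; exact: lcp_even.
- by move=> w /merge_odd_set /(lcpo_odd Is).
Qed.

End Merge.

Lemma invariant_end_growth s : invariant s -> ~ grow_avail e s ->
  invariant (end_growth s).
Proof.
case=> edge closed lt_delta even_lcp odd_lcpo no_grow; split=> //=.
move=> u w Hu euw [lt | [eq _]]; first by apply: (closed u w Hu euw); left.
have even_delta : ~~ odd (delta s).
  by rewrite -eq addn2 /= negbK; exact: even_lcp.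
by apply/negPn/negP => w_out; apply: no_grow; split=> //; exists u, w.
Qed.

Lemma invariant_next_phase s : invariant s -> ~~ growing s ->
  invariant (next_phase s).
Proof.
case=> edge closed lt_delta even_lcp odd_lcpo not_growing; split=> //=.
- move=> u w Hu euw [lt | [_ //]]; apply: (closed u w Hu euw).
  move: lt => /= lt; rewrite /scanned.
  by case: (ltngtP (lcp s u + 2) (delta s)) => cmp; [left | lia | right].
- by move=> v /lt_delta; lia.
Qed.

Lemma invariant_step s s' : invariant s -> step e mate s s' -> invariant s'.
Proof.
move=> Is [v x y _ | | x y b | ].
- by move=> even_delta _ lcp_v _ x_out _; exact: invariant_grow.
- by move=> _; exact: invariant_end_growth.
- by move=> not_growing [[x_even y_even _ _] [_ lcp_xy]] _; exact: invariant_merge.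
- by move=> not_growing _; exact: invariant_next_phase.
Qed.

Lemma invariant_reachable s : reachable e mate s -> invariant s.
Proof.
elim=> [|s0 s1 _ Is0 step01]; first exact: invariant_init.
exact: invariant_step step01.
Qed.

End PartIInvariant.

Theorem lemma2 (V : finType) (e : rel V) (mate : V -> option V) :
  symmetric e -> irreflexive e -> is_matching e mate ->
  forall s : state V, reachable e mate s ->
  forall u v : V, e u v -> u \in even_set s -> v \in odd_set s ->
  lcpo s v <= lcp s u + 1.
Proof.
(* The invariant holds for any relation and any mate function. *)
by move=> _ _ _ s /invariant_reachable /lcpo_edge_bound.
Qed.
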